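(* Let $n,m,l,N\in\mathbb{N}_{>0}$ and let $\mathcal{M}=\{A_1,\dots,A_m\}\subset\mathbb{R}^{n\times n}$. Let $\omega_N=\{(x_{i},j_{i,1},\dots,j_{i,l}) : 1\le i\le N\}\subset \mathbb{S}\times\{1,\dots,m\}^l$ be a sample (drawn uniformly), and for $\mathbf{j}=(j_1,\dots,j_l)$ write $\mathbf{A_j}:=A_{j_l}A_{j_{l-1}}\cdots A_{j_1}$. Let $\gamma^*(\omega_N)$ be the optimal value of the optimization problem $$\min_{\gamma,P}\ \gamma\quad\text{s.t.}\quad (\mathbf{A_j}x)^TP\,\mathbf{A_j}x\le \gamma^{2l}x^TPx\ \ \forall (x,\mathbf{j})\in\omega_N,\qquad P\succ 0,\ \gamma\ge 0,$$ over $\gamma\in\mathbb{R}$ and symmetric $P\in\mathbb{R}^{n\times n}$. Then $$\rho(\mathcal{M})\ \ge\ \frac{\gamma^*(\omega_N)}{\sqrt[2l]{n}}.$$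
   Context: $\mathbb{S}$ denotes the Euclidean unit sphere in $\mathbb{R}^n$. For a finite set $\mathcal{M}\subset\mathbb{R}^{n\times n}$, the joint spectral radius is $\rho(\mathcal{M})=\lim_{k\to\infty}\max\{\|A_{i_1}\cdots A_{i_k}\|^{1/k}: A_{i_j}\in\mathcal{M}\}$. Note the optimization problem only requires the pairs $(x,\mathbf{A_j}x)$, i.e. observed trajectories of length $l$ of the switched system $x_{k+1}=A_{\tau(k)}x_k$. *)

From HB Require Import structures.
From mathcomp Require Import all_boot all_order all_algebra.
From mathcomp Require Import all_classical all_reals all_analysis.
Set Implicit Arguments. Unset Strict Implicit. Unset Printing Implicit Defensive.
Import Order.TTheory GRing.Theory Num.Theory.
Import numFieldNormedType.Exports.
Local Open Scope classical_set_scope.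
Local Open Scope ring_scope.

Definition vnorm {R : realType} {n : nat} (x : 'cV[R]_n) : R :=
  Num.sqrt (\sum_(i < n) x i 0 ^+ 2).

Definition sphere {R : realType} (n : nat) : set 'cV[R]_n :=
  [set x | vnorm x = 1].

Definition opnorm {R : realType} {n : nat} (A : 'M[R]_n) : R :=
  sup ((fun x : 'cV[R]_n => vnorm (A *m x)) @` @sphere R n).

(* A_j := A_{j_l} A_{j_(l-1)} ... A_{j_1} for j = (j_1,...,j_l). *)
Definition prodA {R : realType} {n m l : nat} (A : 'I_m -> 'M[R]_n)
  (j : 'I_l -> 'I_m) : 'M[R]_n :=
  \prod_(i < l) A (j (rev_ord i)).

Definition jsr_seq {R : realType} {n m : nat} (A : 'I_m -> 'M[R]_n) (k : nat) : R :=
  \big[Num.max/0]_(j : {ffun 'I_k.+1 -> 'I_m})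
     (opnorm (prodA A j) `^ (k.+1%:R)^-1).

Definition jsr {R : realType} {n m : nat} (A : 'I_m -> 'M[R]_n) : R :=
  limn (jsr_seq A).

Definition qform {R : realType} {n : nat} (P : 'M[R]_n) (x : 'cV[R]_n) : R :=
  (x^T *m P *m x) 0 0.

Definition posdef {R : realType} {n : nat} (P : 'M[R]_n) : Prop :=
  P^T = P /\ forall x : 'cV[R]_n, x != 0 -> 0 < qform P x.

Definition feasible {R : realType} {n m l N : nat} (A : 'I_m -> 'M[R]_n)
  (xs : 'I_N -> 'cV[R]_n) (js : 'I_N -> ('I_l -> 'I_m)) (g : R) : Prop :=
  0 <= g /\ exists P : 'M[R]_n, posdef P /\
    forall i : 'I_N,
      qform P (prodA A (js i) *m xs i) <= g ^+ (2 * l) * qform P (xs i).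

Definition gamma_star {R : realType} {n m l N : nat} (A : 'I_m -> 'M[R]_n)
  (xs : 'I_N -> 'cV[R]_n) (js : 'I_N -> ('I_l -> 'I_m)) : R :=
  inf [set g | feasible A xs js g].

From HB Require Import structures.
From mathcomp Require Import all_boot all_order all_algebra.
From mathcomp Require Import all_classical all_reals all_analysis.
From mathcomp Require Import ring lra zify.
Import Order.TTheory GRing.Theory Num.Theory.
Set Implicit Arguments. Unset Strict Implicit. Unset Printing Implicit Defensive.
Local Open Scope classical_set_scope.
Local Open Scope ring_scope.

(* For [lam > rho(M)] every product of [k] matrices of [M] has norm [O(lam ^+ k)] (the JSR is
   the limit, hence the infimum, of [jsr_seq]). So the set [K] of the [x] with [|B x| <= lam ^+ k]
   for every such product [B] is a bounded body with nonempty interior, mapped into [lam ^+ k K]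
   by the products of length [k]. An ellipsoid [E] of almost maximal volume inside [K] satisfies
   [K <= c E] for any [c > sqrt n]: otherwise stretching [E] towards a point of [K] outside [c E]
   would give an ellipsoid inside [K] of larger volume. In the norm of [E] each product of
   length [l] thus expands by at most [c lam ^+ l], so [gamma = c ^ (1/l) lam] is feasible;
   letting [c -> sqrt n] and [lam -> rho(M)] gives [gamma^* <= n ^ (1/(2l)) rho(M)]. *)

Section EuclideanNorm.
Variables (R : realType) (n : nat).
Implicit Types (x y z : 'cV[R]_n) (a : R).

Definition dot x y : R := \sum_(i < n) x i 0 * y i 0.

Lemma dotC x y : dot x y = dot y x.
Proof. by apply: eq_bigr => i _; rewrite mulrC. Qed.

Lemma dotDl x y z : dot (x + y) z = dot x z + dot y z.
Proof. by rewrite /dot -big_split; apply: eq_bigr => i _; rewrite !mxE mulrDl. Qed.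

Lemma dotZl a x y : dot (a *: x) y = a * dot x y.
Proof. by rewrite /dot mulr_sumr; apply: eq_bigr => i _; rewrite !mxE mulrA. Qed.

Lemma dotNl x y : dot (- x) y = - dot x y.
Proof. by rewrite -scaleN1r dotZl mulN1r. Qed.

Lemma dotDr x y z : dot z (x + y) = dot z x + dot z y.
Proof. by rewrite dotC dotDl !(dotC z). Qed.

Lemma dotZr a x y : dot y (a *: x) = a * dot y x.
Proof. by rewrite dotC dotZl dotC. Qed.

Lemma dotNr x y : dot y (- x) = - dot y x.
Proof. by rewrite dotC dotNl dotC. Qed.

Lemma dot0l x : dot 0 x = 0.
Proof. by rewrite /dot big1 // => i _; rewrite mxE mul0r. Qed.

Lemma dot_ge0 x : 0 <= dot x x.
Proof. by apply: sumr_ge0 => i _; rewrite -expr2 sqr_ge0. Qed.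

Lemma dot_eq0 x : dot x x = 0 -> x = 0.
Proof.
move=> /eqP; rewrite psumr_eq0 => [/allP x0|i _]; last by rewrite -expr2 sqr_ge0.
apply/matrixP => i j; rewrite (ord1 j) mxE.
by move: (x0 i (mem_index_enum _)); rewrite /= mulf_eq0 orbb => /eqP.
Qed.

Lemma cauchy_schwarz x y : dot x y ^+ 2 <= dot x x * dot y y.
Proof.
have [xx0|xx_neq0] := eqVneq (dot x x) 0.
  by rewrite (dot_eq0 xx0) !dot0l expr0n /= mul0r.
have xx_gt0 : 0 < dot x x by rewrite lt_neqAle eq_sym xx_neq0 dot_ge0.
have := dot_ge0 (dot x x *: y - dot x y *: x).
rewrite !(dotDl, dotDr, dotNl, dotNr, dotZl, dotZr) (dotC y x) => h.
have : 0 <= dot x x * (dot x x * dot y y - dot x y ^+ 2) by nra.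
by rewrite pmulr_rge0 // subr_ge0.
Qed.

Lemma vnormE x : vnorm x = Num.sqrt (dot x x).
Proof. by rewrite /vnorm /dot; congr Num.sqrt; apply: eq_bigr => i _; rewrite expr2. Qed.

Lemma vnorm_ge0 x : 0 <= vnorm x.
Proof. by rewrite vnormE sqrtr_ge0. Qed.

Lemma vnorm_sqr x : vnorm x ^+ 2 = dot x x.
Proof. by rewrite vnormE sqr_sqrtr // dot_ge0. Qed.

Lemma vnorm0 : vnorm (0 : 'cV[R]_n) = 0.
Proof. by rewrite vnormE dot0l sqrtr0. Qed.

Lemma vnorm_eq0 x : vnorm x = 0 -> x = 0.
Proof. by move=> x0; apply: dot_eq0; rewrite -vnorm_sqr x0 expr0n. Qed.

Lemma vnorm_gt0 x : x != 0 -> 0 < vnorm x.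
Proof. by move=> x_neq0; rewrite lt_neqAle vnorm_ge0 andbT eq_sym; apply: contra x_neq0 => /eqP/vnorm_eq0 ->. Qed.

Lemma vnormZ a x : vnorm (a *: x) = `|a| * vnorm x.
Proof. by rewrite !vnormE dotZl dotZr mulrA -expr2 sqrtrM ?sqr_ge0 // sqrtr_sqr. Qed.

Lemma vnormD x y : vnorm (x + y) <= vnorm x + vnorm y.
Proof.
rewrite -(ler_pXn2r (_ : 0 < 2)%N) ?nnegrE ?addr_ge0 ?vnorm_ge0 //.
have xy_le : dot x y <= vnorm x * vnorm y.
  rewrite !vnormE -sqrtrM ?dot_ge0 //; apply: le_trans (ler_norm _) _.
  by rewrite -sqrtr_sqr ler_sqrt ?cauchy_schwarz // mulr_ge0 ?dot_ge0.
rewrite sqrrD !vnorm_sqr dotDl !dotDr (dotC y x); lra.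
Qed.

Lemma vnorm_sum (I : finType) (f : I -> 'cV[R]_n) : vnorm (\sum_i f i) <= \sum_i vnorm (f i).
Proof.
elim/big_rec2: _ => [|i y1 y2 _ h]; first by rewrite vnorm0.
by apply: le_trans (vnormD _ _) _; rewrite lerD2l.
Qed.

Lemma abs_coord_le_vnorm x i : `|x i 0| <= vnorm x.
Proof.
rewrite vnormE -sqrtr_sqr ler_sqrt ?dot_ge0 // /dot (bigD1 i) //= expr2 lerDl.
by apply: sumr_ge0 => j _; rewrite -expr2 sqr_ge0.
Qed.

Lemma vnorm_delta (j : 'I_n) : vnorm (delta_mx j 0 : 'cV[R]_n) = 1.
Proof.
rewrite vnormE /dot (bigD1 j) //= big1 ?addr0 ?mxE ?eqxx ?mulr1 ?sqrtr1 //.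
by move=> i /negbTE ij; rewrite mxE ij mulr0.
Qed.

Lemma vnorm_mulmx_bounded (B : 'M[R]_n) : exists M, forall x, vnorm (B *m x) <= M * vnorm x.
Proof.
exists (\sum_(j < n) vnorm (B *m delta_mx j 0)) => x.
have xE : x = \sum_(j < n) x j 0 *: delta_mx j 0.
  apply/matrixP => i k; rewrite (ord1 k) summxE (bigD1 i) //= !mxE !eqxx mulr1.
  by rewrite big1 ?addr0 // => j /negbTE ji; rewrite !mxE eq_sym ji mulr0.
rewrite {1}xE mulmx_sumr mulr_suml; apply: le_trans (vnorm_sum _) _.
apply: ler_sum => j _; rewrite -scalemxAr vnormZ mulrC.
by apply: ler_wpM2l; [exact: vnorm_ge0 | exact: abs_coord_le_vnorm].
Qed.

Lemma trmx_mul_dot x y : x^T *m y = (dot x y)%:M.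
Proof.
apply/matrixP => i j; rewrite (ord1 i) (ord1 j) !mxE /dot eqxx mulr1n.
by apply: eq_bigr => k _; rewrite mxE.
Qed.

Lemma qform_trmx_mul (S : 'M[R]_n) x : qform (S^T *m S) x = vnorm (S *m x) ^+ 2.
Proof. by rewrite /qform mulmxA -trmx_mul -mulmxA trmx_mul_dot mxE eqxx mulr1n vnorm_sqr. Qed.

End EuclideanNorm.

Section OperatorNorm.
Variables (R : realType) (n : nat).
Hypothesis n_gt0 : (0 < n)%N.
Implicit Types (x : 'cV[R]_n) (B C : 'M[R]_n).

Lemma has_sup_opnorm B : has_sup ((fun x => vnorm (B *m x)) @` @sphere R n).
Proof.
split; first by exists (vnorm (B *m delta_mx (Ordinal n_gt0) 0)), (delta_mx (Ordinal n_gt0) 0); first exact: vnorm_delta.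
have [M BM] := vnorm_mulmx_bounded B.
by exists M => _ [x x1 <-]; have := BM x; rewrite x1 mulr1.
Qed.

Lemma opnorm_ge0 B : 0 <= opnorm B.
Proof.
apply: le_trans (vnorm_ge0 (B *m delta_mx (Ordinal n_gt0) 0)) _.
by apply: sup_upper_bound; [exact: has_sup_opnorm | exists (delta_mx (Ordinal n_gt0) 0); first exact: vnorm_delta].
Qed.

Lemma vnorm_mulmx_le B x : vnorm (B *m x) <= opnorm B * vnorm x.
Proof.
have [->|x_neq0] := eqVneq x 0; first by rewrite mulmx0 vnorm0 mulr0.
have x_gt0 := vnorm_gt0 x_neq0.
have : vnorm (B *m ((vnorm x)^-1 *: x)) <= opnorm B.
  apply: sup_upper_bound; first exact: has_sup_opnorm.
  by exists ((vnorm x)^-1 *: x) => //; rewrite /sphere /= vnormZ ger0_norm ?invr_ge0 ?vnorm_ge0 // mulVf ?gt_eqF.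
by rewrite -scalemxAr vnormZ ger0_norm ?invr_ge0 ?vnorm_ge0 // -ler_pdivrMr // mulrC.
Qed.

Lemma opnorm_le_bound B c : (forall x, vnorm x = 1 -> vnorm (B *m x) <= c) -> opnorm B <= c.
Proof.
move=> Bc; apply: ge_sup => [|_ [x x1 <-]]; last exact: Bc.
by exists (vnorm (B *m delta_mx (Ordinal n_gt0) 0)), (delta_mx (Ordinal n_gt0) 0); first exact: vnorm_delta.
Qed.

Lemma opnormM B C : opnorm (B *m C) <= opnorm B * opnorm C.
Proof.
apply: opnorm_le_bound => x x1; rewrite -mulmxA.
apply: le_trans (vnorm_mulmx_le _ _) _; rewrite ler_wpM2l ?opnorm_ge0 //.
by have := vnorm_mulmx_le C x; rewrite x1 mulr1.
Qed.

Lemma opnorm1 : opnorm (1%:M : 'M[R]_n) <= 1.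
Proof. by apply: opnorm_le_bound => x x1; rewrite mul1mx x1. Qed.

End OperatorNorm.

Section Products.
Variables (R : realType) (n m : nat) (A : 'I_m -> 'M[R]_n).

Inductive is_prod : nat -> 'M[R]_n -> Prop :=
| is_prod0 : is_prod 0 1
| is_prodS k B i : is_prod k B -> is_prod k.+1 (A i * B).

Lemma prodAS k (j : 'I_k.+1 -> 'I_m) :
  prodA A j = A (j ord_max) * prodA A (fun i => j (widen_ord (leqnSn k) i)).
Proof.
rewrite /prodA big_ord_recl; congr (A (j _) * _); first by apply: val_inj; rewrite /= subn1.
apply: eq_bigr => i _; congr (A (j _)); apply: val_inj => /=.
by rewrite /bump /= add1n subSS.
Qed.

Lemma is_prod_prodA k (j : 'I_k -> 'I_m) : is_prod k (prodA A j).
Proof.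
elim: k j => [|k IH] j; first by rewrite /prodA big_ord0; constructor.
by rewrite prodAS; constructor; apply: IH.
Qed.

Lemma is_prodP k B : is_prod k B -> exists j : {ffun 'I_k -> 'I_m}, B = prodA A j.
Proof.
elim=> [|{}k {}B i _ [j ->]]; first by exists (ffun0 (card_ord 0)); rewrite /prodA big_ord0.
exists [ffun x : 'I_k.+1 => if unlift ord_max x is Some y then j y else i].
rewrite prodAS ffunE unlift_none; congr (_ * _).
apply: eq_bigr => x _; rewrite ffunE.
have -> : widen_ord (leqnSn k) (rev_ord x) = lift ord_max (rev_ord x).
  by apply: val_inj; rewrite /= /bump; have := ltn_ord x; case: leqP; lia.
by rewrite liftK.
Qed.

Lemma is_prodM a b B C : is_prod a B -> is_prod b C -> is_prod (b + a) (C * B).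
Proof.
move=> B_prod; elim=> [|k D i _ IH]; first by rewrite mul1r add0n.
by rewrite -mulrA addSn; constructor.
Qed.

Lemma is_prodD a b D : is_prod (a + b) D ->
  exists B C, [/\ is_prod a B, is_prod b C & D = C * B].
Proof.
elim: b D => [|b IH] D.
  by rewrite addn0 => D_prod; exists D, 1; rewrite mul1r; split => //; constructor.
rewrite addnS => D_prod; inversion D_prod; subst.
have [B1 [C1 [B1_prod C1_prod ->]]] := IH _ H0.
by exists B1, (A i * C1); rewrite mulrA; split => //; constructor.
Qed.

Hypothesis n_gt0 : (0 < n)%N.

Lemma opnorm_is_prod_le k B : is_prod k B -> opnorm B <= (1 + \sum_i opnorm (A i)) ^+ k.
Proof.
elim=> [|{}k {}B i _ IH]; first by rewrite expr0 -idmxE; exact: opnorm1.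
apply: le_trans (opnormM n_gt0 _ _) _; rewrite exprS.
apply: ler_pM; rewrite ?opnorm_ge0 //.
rewrite (bigD1 i) //= addrCA lerDl addr_ge0 //.
by apply: sumr_ge0 => ? _; exact: opnorm_ge0.
Qed.

Lemma opnorm_is_prod_blocks P lam : 0 <= lam ->
    (forall B, is_prod P B -> opnorm B <= lam ^+ P) ->
  forall q r B, is_prod (r + q * P) B ->
    opnorm B <= lam ^+ (q * P) * (1 + \sum_i opnorm (A i)) ^+ r.
Proof.
move=> lam_ge0 blockP; elim=> [|q IH] r B.
  by rewrite mul0n addn0 expr0 mul1r; exact: opnorm_is_prod_le.
rewrite mulSnr addnA => /is_prodD [B0 [C [B0_prod C_prod ->]]].
apply: le_trans (opnormM n_gt0 _ _) _.
rewrite exprD (mulrC (lam ^+ _)) -mulrA.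
by apply: ler_pM; rewrite ?opnorm_ge0 //; [exact: blockP | exact: IH].
Qed.

Lemma is_prod_geometric_bound P lam : (0 < P)%N -> 0 < lam ->
    (forall B, is_prod P B -> opnorm B <= lam ^+ P) ->
  exists2 C, 0 < C & forall k B, is_prod k B -> opnorm B <= C * lam ^+ k.
Proof.
move=> P_gt0 lam_gt0 blockP.
set a := 1 + \sum_i opnorm (A i).
have a_ge0 : 0 <= a by rewrite addr_ge0 // sumr_ge0 // => i _; exact: opnorm_ge0.
set M := Num.max 1 (a / lam).
have M_ge1 : 1 <= M by rewrite le_max lexx.
exists (M ^+ P) => [|k B]; first by rewrite exprn_gt0 // (lt_le_trans ltr01).
rewrite (divn_eq k P) addnC => B_prod.
apply: le_trans (opnorm_is_prod_blocks (ltW lam_gt0) blockP B_prod) _.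
set q := (k %/ P)%N; set r := (k %% P)%N.
have -> : M ^+ P * lam ^+ (r + q * P) = lam ^+ (q * P) * (M ^+ P * lam ^+ r) by rewrite exprD; ring.
rewrite ler_pM2l ?exprn_gt0 //.
have -> : a ^+ r = (a / lam) ^+ r * lam ^+ r by rewrite -exprMn mulfVK // gt_eqF.
rewrite ler_pM2r ?exprn_gt0 //.
apply: le_trans (ler_weXn2l M_ge1 (ltnW (ltn_pmod k P_gt0))).
have aM : a / lam <= M by rewrite le_max lexx orbT.
by apply: lerXn2r => //; rewrite nnegrE; [rewrite divr_ge0 // ltW | exact: le_trans ler01 M_ge1].
Qed.

End Products.

Lemma bernoulli_ineq (R : realType) (h : R) (K : nat) : -1 <= h -> 1 + K%:R * h <= (1 + h) ^+ K.
Proof.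
move=> h_ge; elim: K => [|K IH]; first by rewrite mul0r addr0 expr0.
have h1_ge0 : 0 <= 1 + h by rewrite -lerBlDl sub0r.
rewrite exprS; apply: le_trans (ler_wpM2l h1_ge0 IH).
rewrite -natr1; have := ler0n R K; nra.
Qed.

Lemma powR_invnK (R : realType) (K : nat) (a : R) : (0 < K)%N -> 0 <= a ->
  (a `^ (K%:R)^-1) ^+ K = a.
Proof.
move=> K_gt0 a_ge0.
by rewrite -powR_mulrn ?powR_ge0 // -powRrM mulVf ?pnatr_eq0 -?lt0n // ?powRr1.
Qed.

Lemma powR_invn_le (R : realType) (K : nat) (a c : R) : (0 < K)%N -> 0 <= a -> 0 <= c ->
  (a `^ (K%:R)^-1 <= c) = (a <= c ^+ K).
Proof.
by move=> K_gt0 a_ge0 c_ge0; rewrite -(ler_pXn2r K_gt0) ?nnegrE ?powR_ge0 // powR_invnK.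
Qed.

Section JointSpectralRadius.
Variables (R : realType) (n m : nat) (A : 'I_m -> 'M[R]_n).
Hypothesis n_gt0 : (0 < n)%N.

Lemma jsr_seq_ge0 k : 0 <= jsr_seq A k.
Proof. by rewrite /jsr_seq; elim/big_rec: _ => // j acc _ h; rewrite le_max h orbT. Qed.

Lemma jsr_seq_le k c : 0 <= c ->
  (forall j : {ffun 'I_k.+1 -> 'I_m}, opnorm (prodA A j) <= c ^+ k.+1) -> jsr_seq A k <= c.
Proof.
move=> c_ge0 jc; apply: bigmax_le => // j _.
by rewrite powR_invn_le ?opnorm_ge0.
Qed.

Lemma jsr_seq_growth lam : 0 < lam -> (exists p, jsr_seq A p < lam) ->
  exists2 C, 0 < C & forall k B, is_prod A k B -> opnorm B <= C * lam ^+ k.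
Proof.
move=> lam_gt0 [p up_lt]; apply: (is_prod_geometric_bound n_gt0 (P := p.+1)) => // B B_prod.
have [j ->] := is_prodP B_prod.
rewrite -powR_invn_le ?opnorm_ge0 ?ltW //.
exact: le_lt_trans (le_bigmax _ _ j) up_lt.
Qed.

Lemma has_inf_jsr_seq : has_inf (range (jsr_seq A)).
Proof.
split; first by exists (jsr_seq A 0), 0%N.
by exists 0 => _ [k _ <-]; exact: jsr_seq_ge0.
Qed.

Lemma inf_jsr_seq_ge0 : 0 <= inf (range (jsr_seq A)).
Proof. by apply: lb_le_inf; [case: has_inf_jsr_seq | move=> _ [k _ <-]; exact: jsr_seq_ge0]. Qed.

(* For lam = L + eps / 2, some term lies below lam, so every product of length k has norm at
   most C lam ^+ k; Bernoulli's inequality makes C <= ((L + eps) / lam) ^+ k for large k. *)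
Lemma jsr_seq_cvg : jsr_seq A @ \oo --> inf (range (jsr_seq A)).
Proof.
set L := inf _; apply/cvgrPdist_le => eps eps_gt0.
set lam := L + eps / 2.
have lam_gt0 : 0 < lam by rewrite ltr_wpDl ?inf_jsr_seq_ge0 // divr_gt0.
have [_ [p _ <-] up_lt] := inf_adherent (divr_gt0 eps_gt0 (ltr0Sn _ 1)) has_inf_jsr_seq.
have [C C_gt0 growth] := jsr_seq_growth lam_gt0 (ex_intro _ p up_lt).
set h := (L + eps) / lam - 1.
have h_gt0 : 0 < h.
  rewrite subr_gt0 ltr_pdivlMr // mul1r ltrD2l ltr_pdivrMr // ltr_pMr //.
  by rewrite ltr1n.
have epsE : L + eps = (1 + h) * lam by rewrite /h [1 + _]addrC subrK divfK // gt_eqF.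
exists (Num.truncn (C / h)).+1 => // k /= k_gt.
have L_le : L <= jsr_seq A k by apply: (ge_inf has_inf_jsr_seq.2); exists k.
rewrite distrC ger0_norm ?subr_ge0 //.
rewrite lerBlDl epsE; apply: jsr_seq_le => [|j]; first by rewrite ltW // mulr_gt0 // addr_gt0.
apply: le_trans (growth _ _ (is_prod_prodA A j)) _.
rewrite exprMn ler_pM2r ?exprn_gt0 //.
apply: le_trans (bernoulli_ineq _ (le_trans (lerN10 _) (ltW h_gt0))).
have : C / h < k%:R by apply: lt_le_trans (truncnS_gt _) _; rewrite ler_nat.
rewrite ltr_pdivrMr // -natr1; nra.
Qed.

Lemma jsrE : jsr A = inf (range (jsr_seq A)).
Proof. exact: (cvg_lim (T := R^o) _ jsr_seq_cvg). Qed.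

Lemma jsr_ge0 : 0 <= jsr A.
Proof. by rewrite jsrE inf_jsr_seq_ge0. Qed.

Lemma jsr_growth_bound lam : jsr A < lam ->
  exists2 C, 0 < C & forall k B, is_prod A k B -> opnorm B <= C * lam ^+ k.
Proof.
rewrite jsrE => lam_gt; apply: jsr_seq_growth; first exact: le_lt_trans inf_jsr_seq_ge0 lam_gt.
have gap : 0 < lam - inf (range (jsr_seq A)) by rewrite subr_gt0.
have [_ [p _ <-] up_lt] := inf_adherent gap has_inf_jsr_seq.
by exists p; rewrite addrC subrK in up_lt.
Qed.

End JointSpectralRadius.

Section Determinant.
Variables (R : realType) (n : nat).

Lemma det1D_rank1 (u : 'cV[R]_n) (v : 'rV[R]_n) : \det (1 + u *m v) = 1 + (v *m u) 0 0.
Proof.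
have e1 : \det (block_mx (1 + u *m v) u 0 (1 : 'M[R]_1)) = \det (1 + u *m v).
  by rewrite det_ublock det1 mulr1.
have e2 : \det (block_mx (1 : 'M[R]_n) 0 (- v) (1 : 'M[R]_1)) = 1.
  by rewrite det_lblock !det1 mulr1.
have e3 : \det (block_mx (1 : 'M[R]_n) (- u) 0 (1 : 'M[R]_1)) = 1.
  by rewrite det_ublock !det1 mulr1.
have e4 : block_mx (1 + u *m v) u 0 (1 : 'M[R]_1) *m block_mx 1 0 (- v) 1
    = block_mx 1 u (- v) 1.
  rewrite mulmx_block !mulmx1 !mul1mx !mulmx0 ?mul0mx ?addr0 ?add0r.
  by rewrite mulmxN -addrA subrr addr0.
have e5 : block_mx (1 : 'M[R]_n) u (- v) (1 : 'M[R]_1) *m block_mx 1 (- u) 0 1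
    = block_mx 1 0 (- v) (1 + v *m u).
  rewrite mulmx_block !mulmx1 !mul1mx !mulmx0 !addr0.
  by rewrite mulmxN mulNmx opprK addNr addrC.
have := congr1 determinant e4; rewrite det_mulmx e1 e2 mulr1 => detE.
have := congr1 determinant e5; rewrite det_mulmx e3 mulr1 det_lblock det1 mul1r -detE => ->.
by rewrite det_mx11 !mxE.
Qed.

Lemma abs_det_le_fact (T : 'M[R]_n) : (forall i j, `|T i j| <= 1) -> `|\det T| <= (n`!)%:R.
Proof.
move=> T_le1; rewrite /determinant; apply: le_trans (ler_norm_sum _ _ _) _.
rewrite -perm.card_Sn -sum1_card natr_sum; apply: ler_sum => s _.
rewrite normrM normrX normrN normr1 expr1n mul1r normr_prod.
by apply: prodr_ile1 => i _; rewrite normr_ge0 T_le1.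
Qed.

End Determinant.

Section Stretch.
Variables (R : realType) (n : nat).
Implicit Types (w q : 'cV[R]_n) (a b : R).

Definition stretchmx w a b : 'M[R]_n := b *: 1%:M + (a - b) *: (w *m w^T).

Lemma stretchmx_mul w a b q : stretchmx w a b *m q = b *: q + ((a - b) * dot w q) *: w.
Proof.
rewrite /stretchmx mulmxDl -!scalemxAl mul1mx -mulmxA trmx_mul_dot mul_mx_scalar.
by rewrite scalerA.
Qed.

Lemma stretchmxN w a b : stretchmx (- w) a b = stretchmx w a b.
Proof. by rewrite /stretchmx linearN /= mulNmx mulmxN opprK. Qed.

Lemma det_stretchmx w a b : (0 < n)%N -> dot w w = 1 -> 0 < b ->
  \det (stretchmx w a b) = a * b ^+ n.-1.
Proof.
move=> n_gt0 w1 b_gt0.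
have -> : stretchmx w a b = b *: (1 + (((a - b) / b) *: w) *m w^T).
  by rewrite /stretchmx scalerDr -scalemxAl scalerA [b * _]mulrC -mulrA mulVf ?mulr1 ?gt_eqF.
rewrite detZ det1D_rank1 trmx_mul_dot mxE eqxx mulr1n dotZr w1 mulr1.
by rewrite -{1}(prednK n_gt0) exprS; field; rewrite gt_eqF.
Qed.

End Stretch.

Section StretchHull.
Variables (R : realType) (n : nat) (r t : R).
Hypotheses (r_gt1 : 1 < r) (t_gt0 : 0 < t) (t_lt1 : t < 1).
Implicit Types (w q : 'cV[R]_n).

Let alpha := Num.sqrt (1 + t * (r ^+ 2 - 1)).
Let beta := Num.sqrt (1 - t).

Let r_gt0 : 0 < r. Proof. exact: lt_trans ltr01 r_gt1. Qed.

Let r2_gt1 : 0 < r ^+ 2 - 1.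
Proof. by rewrite subr_gt0 -(expr1n _ 2) ltrXn2r // ltW. Qed.

Let alpha_sqr : alpha ^+ 2 = 1 + t * (r ^+ 2 - 1).
Proof. by rewrite sqr_sqrtr // addr_ge0 // mulr_ge0 // ltW. Qed.

Let beta_sqr : beta ^+ 2 = 1 - t.
Proof. by rewrite sqr_sqrtr // subr_ge0 ltW. Qed.

Let alpha_ge1 : 1 <= alpha.
Proof. by rewrite /alpha -[X in X <= _]sqrtr1 ler_sqrt ?lerDl ?addr_ge0 ?mulr_ge0 // ltW. Qed.

Let alpha_le_r : alpha <= r.
Proof.
have alpha_ge0 : 0 <= alpha := le_trans ler01 alpha_ge1.
have r_ge0 := ltW r_gt0.
rewrite -(ler_pXn2r (_ : (0 < 2)%N)) ?nnegrE // alpha_sqr -subr_ge0.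
have -> : r ^+ 2 - (1 + t * (r ^+ 2 - 1)) = (1 - t) * (r ^+ 2 - 1) by ring.
by rewrite mulr_ge0 // ltW // subr_gt0.
Qed.

(* [coef] is the weight given to the tip [r w] when [sigma] is the [w]-component of a vector of
   norm [rho]; the remainder then has norm at most [rho - coef], since the difference of the two
   sides of [hull_sqr_le] is [(alpha * rho - r * sigma) ^+ 2 / (r ^+ 2 - 1)]. *)
Let coef sigma rho := (r * alpha * sigma - rho) / (r ^+ 2 - 1).

Let hull_coef_le sigma rho : 0 <= sigma <= rho -> coef sigma rho <= rho.
Proof.
case/andP=> sigma_ge0 sigma_le; rewrite /coef ler_pdivrMr //.
have : r * (alpha * sigma) <= r * (r * rho).
  by rewrite ler_pM2l //; apply: ler_pM => //; exact: le_trans ler01 alpha_ge1.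
nra.
Qed.

Let hull_sqr_le sigma rho : 0 <= sigma <= rho ->
  (alpha * sigma - coef sigma rho * r) ^+ 2 + beta ^+ 2 * (rho ^+ 2 - sigma ^+ 2)
    <= (rho - coef sigma rho) ^+ 2.
Proof.
move=> _; have r2_neq0 : r ^+ 2 - 1 != 0 by rewrite gt_eqF.
have tE : t = (alpha ^+ 2 - 1) / (r ^+ 2 - 1) by rewrite alpha_sqr addrAC subrr add0r mulfK.
rewrite beta_sqr tE -subr_ge0 /coef.
have -> : (rho - (r * alpha * sigma - rho) / (r ^+ 2 - 1)) ^+ 2 -
  ((alpha * sigma - (r * alpha * sigma - rho) / (r ^+ 2 - 1) * r) ^+ 2 +
   (1 - (alpha ^+ 2 - 1) / (r ^+ 2 - 1)) * (rho ^+ 2 - sigma ^+ 2)) =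
   (alpha * rho - r * sigma) ^+ 2 / (r ^+ 2 - 1) by field.
by rewrite divr_ge0 ?sqr_ge0 // ltW.
Qed.

Lemma stretchmx_hull_nonneg w q : dot w w = 1 -> 0 <= dot w q ->
  exists a z, stretchmx w alpha beta *m q = a *: (r *: w) + z /\ `|a| + vnorm z <= vnorm q.
Proof.
move=> w1 s_ge0.
have [s [y [sE qE wy0]]] : exists s y, [/\ s = dot w q, q = s *: w + y & dot w y = 0].
  exists (dot w q), (q - dot w q *: w); rewrite addrC subrK; split => //.
  by rewrite dotDr dotNr dotZr w1 mulr1 subrr.
have vnorm_wy c d : vnorm (c *: w + d *: y) ^+ 2 = c ^+ 2 + d ^+ 2 * dot y y.
  by rewrite vnorm_sqr !(dotDl, dotDr, dotZl, dotZr) w1 wy0 (dotC y w) wy0; ring.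
have q_sqr : vnorm q ^+ 2 = s ^+ 2 + dot y y.
  by rewrite {1}qE -[y in s *: w + y]scale1r vnorm_wy expr1n mul1r.
have Sq : stretchmx w alpha beta *m q = (alpha * s) *: w + beta *: y.
  rewrite stretchmx_mul {1}qE scalerDr scalerA addrC addrA -scalerDl -sE.
  by congr (_ *: _ + _); ring.
rewrite -sE in s_ge0; set rho := vnorm q; have rho_ge0 : 0 <= rho := vnorm_ge0 q.
have s_le : s <= rho.
  by rewrite -(ler_pXn2r (_ : (0 < 2)%N)) ?nnegrE // q_sqr lerDl dot_ge0.
have [tip_in|tip_out] := leP (r * alpha * s) rho.
  exists 0, (stretchmx w alpha beta *m q); rewrite scale0r add0r normr0 add0r; split => //.
  rewrite -(ler_pXn2r (_ : (0 < 2)%N)) ?nnegrE ?vnorm_ge0 // Sq vnorm_wy q_sqr.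
  rewrite exprMn alpha_sqr beta_sqr.
  have rs_le : r * s <= rho.
    by apply: le_trans tip_in; rewrite -mulrA ler_wpM2l ?(ltW r_gt0) // ler_peMl.
  have : 0 <= t * (rho ^+ 2 - (r * s) ^+ 2).
    by rewrite mulr_ge0 ?subr_ge0 ?lerXn2r ?nnegrE ?mulr_ge0 // ltW.
  rewrite q_sqr; nra.
have s_rho : 0 <= s <= rho by rewrite s_ge0.
exists (coef s rho), ((alpha * s - coef s rho * r) *: w + beta *: y); split.
  by rewrite Sq scalerA addrA -scalerDl; congr (_ *: _ + _); ring.
have coef_ge0 : 0 <= coef s rho by rewrite /coef divr_ge0 ?(ltW r2_gt1) // subr_ge0 ltW.
rewrite ger0_norm // -lerBrDl.
rewrite -(ler_pXn2r (_ : (0 < 2)%N)) ?nnegrE ?vnorm_ge0 ?subr_ge0 ?hull_coef_le //.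
rewrite vnorm_wy; have -> : dot y y = rho ^+ 2 - s ^+ 2 by rewrite q_sqr addrAC subrr add0r.
exact: hull_sqr_le.
Qed.

Lemma stretchmx_hull w q : dot w w = 1 ->
  exists a z, stretchmx w alpha beta *m q = a *: (r *: w) + z /\ `|a| + vnorm z <= vnorm q.
Proof.
move=> w1; have [|s_lt0] := leP 0 (dot w q); first exact: stretchmx_hull_nonneg.
have [||a [z [Sq a_z]]] := @stretchmx_hull_nonneg (- w) q.
- by rewrite dotNl dotNr opprK.
- by rewrite dotNl oppr_ge0 ltW.
by exists (- a), z; rewrite normrN -(stretchmxN w) Sq !scalerN scaleNr.
Qed.

End StretchHull.

(* [(1 + t (c^2 - 1)) (1 - t)^(N-1) = 1 + t (c^2 - N) + O(t^2)]; the chosen [t] is small enough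
   for the first-order term to win. *)
Lemma stretch_det_gain (R : realType) (N : nat) (c : R) : (0 < N)%N -> N%:R < c ^+ 2 ->
  exists2 t, 0 < t < 1 & 1 < (1 + t * (c ^+ 2 - 1)) * (1 - t) ^+ N.-1.
Proof.
move=> N_gt0 cN.
have N_ge1 : 1 <= N%:R :> R by rewrite ler1n.
have c2_gt0 : 0 < c ^+ 2 := lt_trans (lt_le_trans ltr01 N_ge1) cN.
have den_gt0 : 0 < 2 * N%:R * c ^+ 2 by rewrite mulr_gt0 // mulr_gt0 // ltr0n.
set t := (c ^+ 2 - N%:R) / (2 * N%:R * c ^+ 2).
have tE : t * (2 * N%:R * c ^+ 2) = c ^+ 2 - N%:R by rewrite divfK // gt_eqF.
have t_gt0 : 0 < t by rewrite divr_gt0 // subr_gt0.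
have t_lt1 : t < 1 by rewrite ltr_pdivrMr // mul1r; nra.
exists t; first by rewrite t_gt0 t_lt1.
have N1E : (N.-1)%:R = N%:R - 1 :> R by rewrite -{2}(prednK N_gt0) -natr1 addrK.
apply: lt_le_trans (ler_wpM2l _ (bernoulli_ineq N.-1 (_ : -1 <= - t))); last first.
- by rewrite lerN2 ltW.
- have c2_ge1 : 1 <= c ^+ 2 := le_trans N_ge1 (ltW cN).
  by rewrite addr_ge0 // mulr_ge0 ?subr_ge0 // ltW.
have : 0 < t * t * (2 * N%:R * c ^+ 2 - (c ^+ 2 - 1) * (N%:R - 1)).
  by apply: mulr_gt0; [exact: mulr_gt0 | rewrite subr_gt0; nra].
rewrite N1E; nra.
Qed.

Section InscribedEllipsoid.
Variables (R : realType) (n m : nat) (A : 'I_m -> 'M[R]_n) (lam : R).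
Implicit Types (x q v w : 'cV[R]_n) (T : 'M[R]_n).

(* [in_body x] means [x \in K]; [inscribed T] means that the ellipsoid [T (unit ball)] lies in [K]. *)
Definition in_body x := forall k B, is_prod A k B -> vnorm (B *m x) <= lam ^+ k.

Definition inscribed T :=
  forall q k B, is_prod A k B -> vnorm (B *m (T *m q)) <= lam ^+ k * vnorm q.

Hypothesis lam_gt0 : 0 < lam.

Lemma in_bodyZ x mu : in_body x -> 0 <= mu <= 1 -> in_body (mu *: x).
Proof.
move=> x_in /andP [mu_ge0 mu_le1] k B B_prod; rewrite -scalemxAr vnormZ ger0_norm //.
apply: le_trans (ler_wpM2l mu_ge0 (x_in _ _ B_prod)) _.
by rewrite ler_piMl // exprn_ge0 // ltW.
Qed.

Lemma inscribed_coef_le1 T : inscribed T -> forall i j, `|T i j| <= 1.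
Proof.
move=> T_ins i j; have := T_ins (delta_mx j 0) 0%N 1 (is_prod0 A).
rewrite expr0 mul1r vnorm_delta mul1mx -colE => col_le.
by apply: le_trans col_le; have := abs_coord_le_vnorm (col j T) i; rewrite mxE.
Qed.

(* The stretched ellipsoid lies in the convex hull of the old one and of the tips [+- c w]. *)
Lemma inscribed_stretch T w c t : inscribed T -> in_body (T *m (c *: w)) -> dot w w = 1 ->
    1 < c -> 0 < t -> t < 1 ->
  inscribed (T *m stretchmx w (Num.sqrt (1 + t * (c ^+ 2 - 1))) (Num.sqrt (1 - t))).
Proof.
move=> T_ins cw_in w1 c_gt1 t_gt0 t_lt1 q k B B_prod.
have [a [z [Sq a_z]]] := stretchmx_hull c_gt1 t_gt0 t_lt1 q w1.
rewrite -mulmxA Sq mulmxDr -scalemxAr mulmxDr -scalemxAr.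
apply: le_trans (vnormD _ _) _; rewrite vnormZ.
apply: le_trans (_ : `|a| * lam ^+ k + lam ^+ k * vnorm z <= _).
  by apply: lerD; [exact: ler_wpM2l (cw_in _ _ B_prod) | exact: T_ins].
by rewrite mulrC -mulrDr ler_wpM2l // exprn_ge0 // ltW.
Qed.

Variable C : R.
Hypotheses (n_gt0 : (0 < n)%N) (C_gt0 : 0 < C).
Hypothesis growth : forall k B, is_prod A k B -> opnorm B <= C * lam ^+ k.

Lemma inscribed_scalar : inscribed (C^-1 *: 1%:M).
Proof.
move=> q k B B_prod; rewrite -scalemxAl mul1mx -scalemxAr vnormZ ger0_norm ?invr_ge0 ?(ltW C_gt0) //.
rewrite -(ler_pM2l C_gt0) mulrA mulfV ?gt_eqF // mul1r mulrA.
apply: le_trans (vnorm_mulmx_le n_gt0 B q) _.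
by apply: ler_wpM2r; [exact: vnorm_ge0 | exact: growth].
Qed.

Let dets := (fun T => `|\det T|) @` inscribed.

Lemma has_sup_inscribed_det : has_sup dets.
Proof.
split; first by exists `|\det (C^-1 *: 1%:M : 'M[R]_n)|, (C^-1 *: 1%:M); first exact: inscribed_scalar.
exists (n`!)%:R => _ [T T_ins <-]; apply: abs_det_le_fact; exact: inscribed_coef_le1.
Qed.

Lemma inscribed_det_sup_gt0 : 0 < sup dets.
Proof.
apply: lt_le_trans (sup_upper_bound has_sup_inscribed_det (ex_intro2 _ _ _ inscribed_scalar erefl)).
by rewrite normr_gt0 detZ det1 mulr1 expf_neq0 // invr_eq0 gt_eqF.
Qed.

(* If [T] has almost maximal determinant and [T v] lay in [K] with [|v| > c], stretching the
   ellipsoid towards [T v] would give an inscribed ellipsoid of too large a determinant. *)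
Lemma inscribed_john c : 1 < c -> n%:R < c ^+ 2 ->
  exists T, [/\ inscribed T, \det T != 0 & forall v, in_body (T *m v) -> vnorm v <= c].
Proof.
move=> c_gt1 c_sqr; have c_gt0 : 0 < c := lt_trans ltr01 c_gt1.
have [t /andP[t_gt0 t_lt1] gain_gt1] := stretch_det_gain n_gt0 c_sqr.
set alpha := Num.sqrt (1 + t * (c ^+ 2 - 1)); set beta := Num.sqrt (1 - t).
have beta_gt0 : 0 < beta by rewrite sqrtr_gt0 subr_gt0.
have c2_ge1 : 1 <= c ^+ 2 by rewrite -(expr1n _ 2) lerXn2r // ?nnegrE ltW.
have alpha_sqr : alpha ^+ 2 = 1 + t * (c ^+ 2 - 1).
  by rewrite sqr_sqrtr // addr_ge0 // mulr_ge0 ?subr_ge0 // ltW.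
have beta_sqr : beta ^+ 2 = 1 - t by rewrite sqr_sqrtr // subr_ge0 ltW.
set G := alpha * beta ^+ n.-1.
have G_gt1 : 1 < G.
  have G_ge0 : 0 <= G by rewrite mulr_ge0 ?exprn_ge0 ?sqrtr_ge0 // ltW.
  rewrite -(ltr_pXn2r (_ : (0 < 2)%N)) ?nnegrE // expr1n exprMn -exprM mulnC exprM.
  by rewrite alpha_sqr beta_sqr.
set D := sup dets; have D_gt0 : 0 < D := inscribed_det_sup_gt0.
have gap : 0 < D - D / G by rewrite subr_gt0 ltr_pdivrMr ?ltr_pMr // (lt_trans ltr01).
have [_ [T T_ins <-]] := sup_adherent gap has_sup_inscribed_det.
rewrite opprB addrCA subrr addr0 => DG_lt.
exists T; split => //.
  by rewrite -normr_gt0; apply: le_lt_trans DG_lt; rewrite divr_ge0 // ?ltW // (lt_trans ltr01).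
move=> v v_in; rewrite leNgt; apply/negP => c_lt.
have v_gt0 : 0 < vnorm v := lt_trans c_gt0 c_lt.
set w := (vnorm v)^-1 *: v.
have w1 : dot w w = 1 by rewrite -vnorm_sqr vnormZ ger0_norm ?invr_ge0 ?ltW // mulVf ?gt_eqF ?expr1n.
have cw_in : in_body (T *m (c *: w)).
  rewrite scalerA -scalemxAr; apply: in_bodyZ => //.
  by rewrite divr_ge0 ?(ltW c_gt0) ?(ltW v_gt0) //= ler_pdivrMr // mul1r ltW.
have TS_ins := inscribed_stretch T_ins cw_in w1 c_gt1 t_gt0 t_lt1.
have := sup_upper_bound has_sup_inscribed_det (ex_intro2 _ _ _ TS_ins erefl).
rewrite det_mulmx det_stretchmx // -/alpha -/beta -/G normrM (ger0_norm (ltW (lt_trans ltr01 G_gt1))).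
by rewrite -ler_pdivlMr ?(lt_trans ltr01) // leNgt DG_lt.
Qed.

End InscribedEllipsoid.

Lemma feasible_of_unitmx (R : realType) (n m l N : nat) (A : 'I_m -> 'M[R]_n)
    (xs : 'I_N -> 'cV[R]_n) (js : 'I_N -> ('I_l -> 'I_m)) (S : 'M[R]_n) (g : R) :
    S \in unitmx -> 0 <= g ->
    (forall i, vnorm (S *m (prodA A (js i) *m xs i)) <= g ^+ l * vnorm (S *m xs i)) ->
  feasible A xs js g.
Proof.
move=> S_unit g_ge0 S_contr; split => //; exists (S^T *m S); split.
  split => [|x x_neq0]; first by rewrite trmx_mul trmxK.
  rewrite qform_trmx_mul exprn_gt0 // vnorm_gt0 //; apply: contra x_neq0 => /eqP Sx0.
  by rewrite -(mul1mx x) -(mulVmx S_unit) -mulmxA Sx0 mulmx0.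
move=> i; rewrite !qform_trmx_mul mulnC exprM -exprMn.
by apply: lerXn2r; rewrite ?nnegrE ?mulr_ge0 ?exprn_ge0 ?vnorm_ge0.
Qed.

(* [S = T^-1] for the John ellipsoid [T] of [K]: the norm [|S x|] is squeezed between the gauge
   of [K] and [c] times it, and [B] maps [K] into [lam ^+ k K]. *)
Lemma jsr_ellipsoid_contraction (R : realType) (n m : nat) (A : 'I_m -> 'M[R]_n) (lam c : R) :
    (0 < n)%N -> jsr A < lam -> 1 < c -> n%:R < c ^+ 2 ->
  exists2 S : 'M[R]_n, S \in unitmx &
    forall k B x, is_prod A k B -> vnorm (S *m (B *m x)) <= c * (lam ^+ k * vnorm (S *m x)).
Proof.
move=> n_gt0 lam_gt c_gt1 c_sqr.
have lam_gt0 : 0 < lam := le_lt_trans (jsr_ge0 A n_gt0) lam_gt.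
have [C C_gt0 growth] := jsr_growth_bound n_gt0 lam_gt.
have [T [T_ins detT_neq0 T_john]] := inscribed_john lam_gt0 n_gt0 C_gt0 growth c_gt1 c_sqr.
have T_unit : T \in unitmx by rewrite unitmxE unitfE.
exists (invmx T) => [|k B x B_prod]; first by rewrite unitmx_inv.
set y := invmx T *m x.
have xE : x = T *m y by rewrite /y mulmxA mulmxV // mul1mx.
have [y0|y_neq0] := eqVneq y 0; first by rewrite xE y0 !mulmx0 vnorm0 !mulr0.
have Bx_gt0 : 0 < lam ^+ k * vnorm y by rewrite mulr_gt0 ?exprn_gt0 ?vnorm_gt0.
set v := (lam ^+ k * vnorm y)^-1 *: (invmx T *m (B *m x)).
have v_in : in_body A lam (T *m v).
  move=> k' B' B'_prod; rewrite /v -scalemxAr mulmxA mulmxV // mul1mx -scalemxAr vnormZ.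
  rewrite ger0_norm ?invr_ge0 ?(ltW Bx_gt0) // mulrC ler_pdivrMr // mulrA -exprD.
  by rewrite mulmxA {1}xE; exact: T_ins (is_prodM B_prod B'_prod).
have := T_john _ v_in; rewrite /v vnormZ ger0_norm ?invr_ge0 ?(ltW Bx_gt0) // mulrC.
by rewrite ler_pdivrMr.
Qed.

Lemma feasible_above (R : realType) (n m l N : nat) (A : 'I_m -> 'M[R]_n)
    (xs : 'I_N -> 'cV[R]_n) (js : 'I_N -> ('I_l -> 'I_m)) (g : R) :
    (0 < n)%N -> (0 < l)%N -> jsr A * n%:R `^ ((2 * l)%:R)^-1 < g ->
  feasible A xs js g.
Proof.
move=> n_gt0 l_gt0; set root := n%:R `^ _ => g_gt.
have root_gt0 : 0 < root by rewrite powR_gt0 // ltr0n.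
have rootE : root ^+ (2 * l) = n%:R by rewrite powR_invnK // muln_gt0.
have g_gt0 : 0 < g by apply: le_lt_trans g_gt; rewrite mulr_ge0 ?(jsr_ge0 A n_gt0) // ltW.
have jsr_lt : jsr A < g / root by rewrite ltr_pdivlMr.
have [lam_gt lam_lt] := midf_lt jsr_lt.
set lam := (_ + _) / 2 in lam_gt lam_lt.
have lam_gt0 : 0 < lam := le_lt_trans (jsr_ge0 A n_gt0) lam_gt.
set c := (g / lam) ^+ l.
have root_lt : root < g / lam by rewrite ltr_pdivlMr // mulrC -ltr_pdivlMr.
have glam_ge0 : 0 <= g / lam by rewrite divr_ge0 // ltW.
have c_sqr : n%:R < c ^+ 2.
  by rewrite -exprM mulnC -rootE ltr_pXn2r ?muln_gt0 ?l_gt0 ?nnegrE ?(ltW root_gt0).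
have c_gt1 : 1 < c.
  rewrite -(ltr_pXn2r (_ : (0 < 2)%N)) ?nnegrE ?exprn_ge0 // expr1n.
  by apply: le_lt_trans c_sqr; rewrite ler1n.
have [S S_unit S_contr] := jsr_ellipsoid_contraction n_gt0 lam_gt c_gt1 c_sqr.
have cE : c * lam ^+ l = g ^+ l by rewrite -exprMn divfK // gt_eqF.
apply: (feasible_of_unitmx S_unit (ltW g_gt0)) => i.
by rewrite -cE -mulrA; exact: S_contr (is_prod_prodA A (js i)).
Qed.

Unset Implicit Arguments.
Theorem theorem3 (R : realType) (n m l N : nat)
  (hn : (0 < n)%N) (hm : (0 < m)%N) (hl : (0 < l)%N) (hN : (0 < N)%N)
  (A : 'I_m -> 'M[R]_n)
  (xs : 'I_N -> 'cV[R]_n) (js : 'I_N -> ('I_l -> 'I_m))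
  (hxs : forall i, xs i \in @sphere R n) :
  gamma_star A xs js / (n%:R `^ ((2 * l)%:R)^-1) <= jsr A.
Proof.
have root_gt0 : 0 < n%:R `^ ((2 * l)%:R)^-1 :> R by rewrite powR_gt0 // ltr0n.
rewrite ler_pdivrMr //; apply/ler_addgt0Pr => e e_gt0.
have gamma_lb : has_lbound [set g | feasible A xs js g] by exists 0 => g [].
by apply: (ge_inf gamma_lb); apply: feasible_above; rewrite // ltrDl.
Qed.
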